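(* Let $\varphi$ be a finite conjunction of literals of the two forms $x\in y$ and $x = y\setminus z$ (with $x,y,z$ set variables), and let $\mathrm{Vars}(\varphi)$ be its finite set of variables. Let $M$ be a set assignment over $\mathrm{Vars}(\varphi)$ satisfying $\varphi$; let $\bar x,\bar y\in\mathrm{Vars}(\varphi)$, let $\overline{M}$ be a set assignment over $\mathrm{Vars}(\varphi)$ satisfying $\varphi$ with $\overline{M}\bar x\neq \overline{M}\bar y$, and let $\mathfrak{t}$ be a set belonging to exactly one of $\overline{M}\bar x$, $\overline{M}\bar y$. Fix a set $\mathfrak{s}$ with $\mathrm{rk}(\mathfrak{s})>\mathrm{rk}(M)$. Define $\mathsf{V}_n\subseteq \mathrm{Vars}(\varphi)$ and set assignments $M_n$ over $\mathrm{Vars}(\varphi)$ as follows: $\mathsf{V}_0=\{u\in\mathrm{Vars}(\varphi)\mid \mathfrak{t}\in\overline{M}u\}$; $\mathsf{V}_n=\{u\in\mathrm{Vars}(\varphi)\mid Mu\cap\{Mw\mid w\in\mathsf{V}_{n-1}\}\neq\emptyset\}$ for $n\ge1$; $M_0v=Mv\cup\{\mathfrak{s}\}$ if $v\in\mathsf{V}_0$ and $M_0v=Mv$ otherwise; for $n\ge1$, $M_nv=M_{n-1}v\cup\{M_{n-1}u\mid u\in\mathsf{V}_{n-1},\ Mu\in Mv\}$ if $v\in\mathsf{V}_n$ and $M_nv=M_{n-1}v$ otherwise. Then: (a) for every $v\in\mathrm{Vars}(\varphi)$, $Mv\subseteq M_0v\subseteq M_1v\subseteq\cdots\subseteq M_nv\subseteq\cdots$;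 (b) for all $v\in\mathrm{Vars}(\varphi)$ and $n\in\mathbb{N}$, $M_nv\subseteq Mv\cup\{\mathfrak{s}\}\cup\bigcup_{k=0}^{n-1}\{M_ku\mid u\in\mathsf{V}_k,\ Mu\in Mv\}$.
   Context: A set assignment is a map from a finite set of set variables into the von Neumann universe $\mathcal{V}=\bigcup_\alpha\mathcal{V}_\alpha$, $\mathcal{V}_\alpha=\bigcup_{\beta<\alpha}\mathcal{P}(\mathcal{V}_\beta)$; it satisfies $x\in y$ iff $Mx\in My$ and $x=y\setminus z$ iff $Mx=My\setminus Mz$. The rank $\mathrm{rk}(s)$ of a set $s$ is the least ordinal $\alpha$ with $s\subseteq\mathcal{V}_\alpha$, and $\mathrm{rk}(M)=\max\{\mathrm{rk}(Mx)\mid x\in\mathrm{dom}(M)\}$. *)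

(* Sets of the von Neumann universe are modelled by Aczel's
   well-founded trees (Werner, "Sets in types"), with extensional equality. *)
From Stdlib Require Import List Arith ClassicalEpsilon.
Import ListNotations.

Inductive V : Type := sup : forall (A : Type), (A -> V) -> V.

Definition idx (x : V) : Type := match x with sup A _ => A end.
Definition elt (x : V) : idx x -> V := match x with sup _ f => f end.

Fixpoint eqV (x y : V) {struct x} : Prop :=
  match x, y with
  | sup A f, sup B g =>
      (forall a, exists b, eqV (f a) (g b)) /\ (forall b, exists a, eqV (f a) (g b))
  end.

Definition inV (a x : V) : Prop := exists i : idx x, eqV a (elt x i).
Definition subV (x y : V) : Prop := forall a, inV a x -> inV a y.

Definition emptyV : V := sup False (fun e => match e with end).
Definition singV (s : V) : V := sup unit (fun _ => s).
Definition unionV (x y : V) : V :=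
  sup (idx x + idx y)%type
      (fun i => match i with inl a => elt x a | inr b => elt y b end).
Definition diffV (y z : V) : V :=
  sup {i : idx y | ~ inV (elt y i) z} (fun i => elt y (proj1_sig i)).
Definition imgV {I : Type} (P : I -> Prop) (F : I -> V) : V :=
  sup {u : I | P u} (fun u => F (proj1_sig u)).

(* Rank comparison: rk(x) = sup_{a in x} (rk(a)+1), hence
   rk x <= rk y  iff  every a in x has rk a < rk y,
   rk a <  rk y  iff  some b in y has rk a <= rk b. *)
Fixpoint rk_le (x y : V) {struct x} : Prop :=
  match x with
  | sup A f => forall a : A, exists b : idx y, rk_le (f a) (elt y b)
  end.
Definition rk_lt (x y : V) : Prop := exists b : idx y, rk_le x (elt y b).

Definition var := nat.
Inductive literal : Type :=
  | LMem  : var -> var -> literal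
  | LDiff : var -> var -> var -> literal.
Definition formula := list literal.

Definition lit_vars (l : literal) : list var :=
  match l with LMem x y => [x; y] | LDiff x y z => [x; y; z] end.
Definition Vars (phi : formula) : list var := flat_map lit_vars phi.

(* A set assignment over Vars(phi): only its values on Vars(phi) matter. *)
Definition assignment := var -> V.

Definition sat_lit (M : assignment) (l : literal) : Prop :=
  match l with
  | LMem x y => inV (M x) (M y)
  | LDiff x y z => eqV (M x) (diffV (M y) (M z))
  end.
Definition sat (M : assignment) (phi : formula) : Prop :=
  forall l, In l phi -> sat_lit M l.

(* rk(s) > rk(M) = max { rk(M x) | x in dom M } *)
Definition rk_gt_assignment (s : V) (phi : formula) (M : assignment) : Prop :=
  forall v, In v (Vars phi) -> rk_lt (M v) s.

Definition dec (P : Prop) : {P} + {~ P} := excluded_middle_informative P.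

Fixpoint Vn (phi : formula) (M Mbar : assignment) (t : V) (n : nat) : var -> Prop :=
  match n with
  | 0 => fun u => In u (Vars phi) /\ inV t (Mbar u)
  | S m => fun u => In u (Vars phi) /\
             (exists a, inV a (M u) /\ inV a (imgV (Vn phi M Mbar t m) M))
  end.

Fixpoint Mn (phi : formula) (M Mbar : assignment) (t s : V) (n : nat) : assignment :=
  match n with
  | 0 => fun v => if dec (Vn phi M Mbar t 0 v) then unionV (M v) (singV s) else M v
  | S m => fun v =>
      if dec (Vn phi M Mbar t (S m) v)
      then unionV (Mn phi M Mbar t s m v)
             (imgV (fun u => Vn phi M Mbar t m u /\ inV (M u) (M v))
                   (Mn phi M Mbar t s m))
      else Mn phi M Mbar t s m v
  end.

(* ⋃_{k=0}^{n-1} { M_k u | u ∈ V_k, M u ∈ M v } *)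
Definition bigU (phi : formula) (M Mbar : assignment) (t s : V) (n : nat) (v : var) : V :=
  imgV (fun p : nat * var => fst p < n /\ Vn phi M Mbar t (fst p) (snd p)
                              /\ inV (M (snd p)) (M v))
       (fun p => Mn phi M Mbar t s (fst p) (snd p)).

From Stdlib Require Import List Arith Lia.

Lemma subV_refl x : subV x x.
Proof. intros a Ha; exact Ha. Qed.

Lemma subV_trans x y z : subV x y -> subV y z -> subV x z.
Proof. intros Hxy Hyz a Ha; apply Hyz, Hxy, Ha. Qed.

Lemma subV_unionl x y : subV x (unionV x y).
Proof. intros a [i Hi]; exists (inl i); exact Hi. Qed.

Lemma subV_unionr x y : subV y (unionV x y).
Proof. intros a [i Hi]; exists (inr i); exact Hi. Qed.

Lemma subV_union x y z : subV x z -> subV y z -> subV (unionV x y) z.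
Proof.
  intros Hx Hy a [[i | i] Hi].
  - apply Hx; exists i; exact Hi.
  - apply Hy; exists i; exact Hi.
Qed.

Lemma subV_imgV_reindex {I J : Type} (P : I -> Prop) (Q : J -> Prop)
    (F : I -> V) (G : J -> V) (f : I -> J) :
  (forall u, P u -> Q (f u)) -> (forall u, F u = G (f u)) ->
  subV (imgV P F) (imgV Q G).
Proof.
  intros HPQ HFG a [[u Hu] Ha].
  exists (exist _ (f u) (HPQ u Hu)); simpl in *.
  rewrite <- HFG; exact Ha.
Qed.

Section Construction.

Variables (phi : formula) (M Mbar : assignment) (t s : V).

Let Vn := Vn phi M Mbar t.
Let Mn := Mn phi M Mbar t s.
Let bigU := bigU phi M Mbar t s.

Definition Mn_new (n : nat) (v : var) : V :=
  imgV (fun u => Vn n u /\ inV (M u) (M v)) (Mn n).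

Lemma Mn_succ (n : nat) (v : var) :
  Mn (S n) v =
  if dec (Vn (S n) v) then unionV (Mn n v) (Mn_new n v) else Mn n v.
Proof. reflexivity. Qed.

Lemma subV_M_Mn0 (v : var) : subV (M v) (Mn 0 v).
Proof.
  unfold Mn; simpl; destruct (dec _).
  - apply subV_unionl.
  - apply subV_refl.
Qed.

Lemma subV_Mn0 (v : var) : subV (Mn 0 v) (unionV (M v) (singV s)).
Proof.
  unfold Mn; simpl; destruct (dec _).
  - apply subV_refl.
  - apply subV_unionl.
Qed.

Lemma subV_Mn_succ (n : nat) (v : var) : subV (Mn n v) (Mn (S n) v).
Proof.
  rewrite Mn_succ; destruct (dec _).
  - apply subV_unionl.
  - apply subV_refl.
Qed.

Lemma subV_Mn_succ_new (n : nat) (v : var) :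
  subV (Mn (S n) v) (unionV (Mn n v) (Mn_new n v)).
Proof.
  rewrite Mn_succ; destruct (dec _).
  - apply subV_refl.
  - apply subV_unionl.
Qed.

Lemma subV_bigU_succ (n : nat) (v : var) : subV (bigU n v) (bigU (S n) v).
Proof.
  apply subV_imgV_reindex with (f := fun p => p); [| reflexivity].
  intros p [Hp HV]; split; [lia | exact HV].
Qed.

Lemma subV_Mn_new_bigU (n : nat) (v : var) : subV (Mn_new n v) (bigU (S n) v).
Proof.
  apply subV_imgV_reindex with (f := fun u => (n, u)); [| reflexivity].
  intros u HV; split; [simpl; lia | exact HV].
Qed.

Lemma subV_Mn_bound (n : nat) (v : var) :
  subV (Mn n v) (unionV (unionV (M v) (singV s)) (bigU n v)).
Proof.
  induction n as [| n IH].
  - eapply subV_trans; [apply subV_Mn0 | apply subV_unionl].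
  - eapply subV_trans; [apply subV_Mn_succ_new | apply subV_union].
    + eapply subV_trans; [exact IH | apply subV_union].
      * apply subV_unionl.
      * eapply subV_trans; [apply subV_bigU_succ | apply subV_unionr].
    + eapply subV_trans; [apply subV_Mn_new_bigU | apply subV_unionr].
Qed.

End Construction.

Theorem lemma2 (phi : formula) (M Mbar : assignment) (xb yb : var) (t s : V) :
  sat M phi ->
  sat Mbar phi ->
  In xb (Vars phi) -> In yb (Vars phi) ->
  ~ eqV (Mbar xb) (Mbar yb) ->
  ((inV t (Mbar xb) /\ ~ inV t (Mbar yb)) \/ (~ inV t (Mbar xb) /\ inV t (Mbar yb))) ->
  rk_gt_assignment s phi M ->
  (* (a) *)
  (forall v, In v (Vars phi) ->
     subV (M v) (Mn phi M Mbar t s 0 v) /\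
     (forall n, subV (Mn phi M Mbar t s n v) (Mn phi M Mbar t s (S n) v))) /\
  (* (b) *)
  (forall v n, In v (Vars phi) ->
     subV (Mn phi M Mbar t s n v)
          (unionV (unionV (M v) (singV s)) (bigU phi M Mbar t s n v))).
Proof.
  (* (a) and (b) hold for any M, Mbar, t and s; the remaining hypotheses are
     needed only for the paper's later claims about the M_n. *)
  intros _ _ _ _ _ _ _; split.
  - intros v _; split.
    + apply subV_M_Mn0.
    + intro n; apply subV_Mn_succ.
  - intros v n _; apply subV_Mn_bound.
Qed.
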